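(* Let $\mathcal{D}$ be the class of all finite digraphs and let $D\in\mathcal{D}$. The class $\mathrm{Av}(D)=\{E\in\mathcal{D}: D\not\preceq E\}$, with respect to the homomorphic image ordering $\preceq$, is well quasi-ordered if and only if $D$ is isomorphic to the complete digraph $\overrightarrow{K}_n$ for some $n\ge1$; in that case $\mathrm{Av}(D)$ is finite.
   Context: A digraph is a set $D$ with a binary relation $E(D)\subseteq D\times D$ (loops allowed). $\overrightarrow{K}_n$ is the digraph on $\{1,\dots,n\}$ with edge set $\{(i,j):1\le i,j\le n\}$ (all ordered pairs, including loops). A homomorphism maps edges to edges. Homomorphic image ordering: $A\preceq B$ iff there is a surjective homomorphism $B\to A$. Well quasi-ordered means no infinite strictly decreasing sequence and no infinite antichain; digraphs considered up to isomorphism. *)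

From Stdlib Require Import List.
From mathcomp Require Import all_boot.
Set Implicit Arguments. Unset Strict Implicit. Unset Printing Implicit Defensive.

(* A finite digraph: vertex set {0,..,n-1} = 'I_n with an edge relation
   (loops allowed).  Every finite digraph is isomorphic to one of these. *)
Definition digraph := {n : nat & rel 'I_n}.
Definition dsize (D : digraph) : nat := projT1 D.
Definition dedge (D : digraph) : rel 'I_(dsize D) := projT2 D.

Definition is_hom (A B : digraph) (f : 'I_(dsize A) -> 'I_(dsize B)) : Prop :=
  forall x y, dedge x y -> dedge (f x) (f y).

Definition himg_le (A B : digraph) : Prop :=
  exists f : 'I_(dsize B) -> 'I_(dsize A),
    is_hom f /\ (forall y, exists x, f x = y).

Definition himg_lt (A B : digraph) : Prop := himg_le A B /\ ~ himg_le B A.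

Definition diso (A B : digraph) : Prop :=
  exists f : 'I_(dsize A) -> 'I_(dsize B),
    bijective f /\ (forall x y, dedge x y = dedge (f x) (f y)).

Definition Kcomplete (n : nat) : digraph := existT _ n (fun _ _ => true).

Definition Av (D : digraph) (E : digraph) : Prop := ~ himg_le D E.

Definition wqo (C : digraph -> Prop) : Prop :=
  (~ exists s : nat -> digraph,
       (forall i, C (s i)) /\ (forall i, himg_lt (s i.+1) (s i))) /\
  (~ exists s : nat -> digraph,
       (forall i, C (s i)) /\ (forall i j, i <> j -> ~ himg_le (s i) (s j))).

Definition finite_upto_iso (C : digraph -> Prop) : Prop :=
  exists L : seq digraph, forall E, C E -> exists2 F, In F L & diso E F.

(* If D is K_n, every member of Av(D) has fewer than n vertices, and there are
   only finitely many such digraphs up to isomorphism; a finite class is wqo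
   by the pigeonhole principle.  Otherwise D is empty, has a vertex without a
   loop, or has two distinct vertices x, y with no edge x -> y.  Every surjective
   homomorphism between loopless complete digraphs, or between complements of
   directed paths with at least two vertices, is injective, so both families
   are infinite antichains; the first lies in Av(D) in the last case, the
   second (all of whose vertices carry loops) in the two other cases. *)

From mathcomp Require Import all_boot.
From Stdlib Require Import ClassicalEpsilon.

Set Implicit Arguments.
Unset Strict Implicit.
Unset Printing Implicit Defensive.

Lemma card_le_onto (T T' : finType) (f : T -> T') :
  (forall y, exists x, f x = y) -> #|T'| <= #|T|.
Proof.
move=> f_onto; apply: leq_trans (leq_image_card f T).
apply: subset_leq_card; apply/subsetP => y _.
by have [x <-] := f_onto y; apply: image_f.
Qed.

Lemma inj_onto_ord_eq m n (f : 'I_m -> 'I_n) :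
  injective f -> (forall y, exists x, f x = y) -> m = n.
Proof.
move=> f_inj f_onto; apply/eqP; rewrite eqn_leq.
by have := leq_card _ f_inj; have := card_le_onto f_onto; rewrite !card_ord => -> ->.
Qed.

Lemma ord_pigeonhole m (g : nat -> 'I_m) : exists i j, i < j /\ g i = g j.
Proof.
pose h (i : 'I_m.+1) := g i.
have /injectivePn [x [y xy hxy]] : ~~ injectiveb h.
  by apply/injectiveP => /leq_card; rewrite !card_ord ltnn.
by move: xy; rewrite neq_ltn => /orP [] lt; [exists x, y | exists y, x].
Qed.

Lemma mem_In (T : eqType) (x : T) (s : seq T) : x \in s -> List.In x s.
Proof.
elim: s => //= a s IHs; rewrite in_cons => /orP [/eqP ->|/IHs]; by [left | right].
Qed.

Lemma himg_refl A : himg_le A A.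
Proof. by exists id; split => // y; exists y. Qed.

Lemma himg_trans A B C : himg_le A B -> himg_le B C -> himg_le A C.
Proof.
move=> [f [f_hom f_onto]] [g [g_hom g_onto]]; exists (f \o g); split.
  by move=> x y /g_hom /f_hom.
by move=> z; have [y <-] := f_onto z; have [x <-] := g_onto y; exists x.
Qed.

Lemma diso_himg_le A B : diso A B -> himg_le A B.
Proof.
move=> [f [[g fK gK] f_edge]]; exists g; split.
  by move=> x y; rewrite f_edge !gK.
by move=> y; exists (f y); rewrite fK.
Qed.

Lemma diso_himg_ge A B : diso A B -> himg_le B A.
Proof.
move=> [f [[g _ gK] f_edge]]; exists f; split; first by move=> x y; rewrite f_edge.
by move=> y; exists (g y); rewrite gK.
Qed.

Lemma hom_nonedge A B (f : 'I_(dsize A) -> 'I_(dsize B)) x y :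
  is_hom f -> ~~ dedge (f x) (f y) -> ~~ dedge x y.
Proof. by move=> f_hom; apply: contra; apply: f_hom. Qed.

Lemma himg_descending (s : nat -> digraph) :
  (forall i, himg_le (s i.+1) (s i)) -> forall i j, i <= j -> himg_le (s j) (s i).
Proof.
move=> step i j /subnKC <-; elim: (j - i) => [|k IHk].
  by rewrite addn0; apply: himg_refl.
by rewrite addnS; apply: himg_trans (step _) IHk.
Qed.

Lemma finite_upto_iso_repeat (C : digraph -> Prop) (s : nat -> digraph) :
  finite_upto_iso C -> (forall i, C (s i)) ->
  exists i j, i < j /\ himg_le (s i) (s j) /\ himg_le (s j) (s i).
Proof.
move=> [L L_iso] Cs.
have [g g_iso] : exists g : nat -> 'I_(size L),
    forall i, diso (s i) (List.nth (g i) L (s 0)).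
  apply: (choice (fun i (k : 'I_(size L)) => diso (s i) (List.nth k L (s 0)))) => i.
  have [F /(List.In_nth _ _ (s 0)) [k [/ltP k_lt <-]]] := L_iso _ (Cs i).
  by exists (Ordinal k_lt).
have [i [j [ij gij]]] := ord_pigeonhole g.
have := g_iso j; have := g_iso i; rewrite gij => iso_i iso_j.
exists i, j; split=> //; split; apply: himg_trans.
- exact: diso_himg_le iso_i.
- exact: diso_himg_ge iso_j.
- exact: diso_himg_le iso_j.
- exact: diso_himg_ge iso_i.
Qed.

Lemma finite_upto_iso_wqo C : finite_upto_iso C -> wqo C.
Proof.
move=> C_fin; split.
  move=> [s [Cs s_lt]]; have [i [j [ij [le_ij _]]]] := finite_upto_iso_repeat C_fin Cs.
  apply: (proj2 (s_lt i)); apply: himg_trans le_ij _.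
  by apply: himg_descending ij => k; case: (s_lt k).
move=> [s [Cs s_anti]]; have [i [j [ij [le_ij _]]]] := finite_upto_iso_repeat C_fin Cs.
by apply: s_anti le_ij => eij; rewrite eij ltnn in ij.
Qed.

Lemma finite_upto_iso_sub (C C' : digraph -> Prop) :
  (forall E, C E -> C' E) -> finite_upto_iso C' -> finite_upto_iso C.
Proof. by move=> CC' [L L_iso]; exists L => E /CC'/L_iso. Qed.

Lemma finite_upto_iso_small n : finite_upto_iso (fun E => dsize E < n).
Proof.
pose of_set k (S : {set 'I_k * 'I_k}) : digraph :=
  existT _ k (fun x y => (x, y) \in S).
exists (List.flat_map (fun k => List.map (of_set k) (enum {set 'I_k * 'I_k})) (iota 0 n)).
move=> [k r] /= k_lt; exists (of_set k [set p | r p.1 p.2]).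
  apply/List.in_flat_map; exists k; split; first by apply: mem_In; rewrite mem_iota.
  apply/List.in_map_iff; exists [set p | r p.1 p.2]; split=> //.
  by apply: mem_In; rewrite mem_enum.
exists id; split; first exact: inj_card_bij.
by move=> x y /=; rewrite inE.
Qed.

Lemma Kcomplete_himg_le n E : 0 < n <= dsize E -> himg_le (Kcomplete n) E.
Proof.
case: n => // n /= n_le; exists (fun x => inord (val x)); split => // y.
have y_lt : y < dsize E by apply: leq_trans n_le.
by exists (Ordinal y_lt); apply: val_inj; rewrite /= inordK.
Qed.

Lemma Av_Kcomplete_small D n E :
  0 < n -> diso D (Kcomplete n) -> Av D E -> dsize E < n.
Proof.
move=> n_pos D_iso; apply: contraPltn => n_le E_le; apply: E_le.
by apply: himg_trans (diso_himg_le D_iso) (Kcomplete_himg_le _); rewrite n_pos.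
Qed.

Lemma complete_diso D :
  (forall x y : 'I_(dsize D), dedge x y) -> diso D (Kcomplete (dsize D)).
Proof.
by move=> full; exists id; split; [exists id | move=> x y; rewrite full].
Qed.

Lemma antichain_not_wqo (C : digraph -> Prop) (s : nat -> digraph) :
  (forall i, C (s i)) -> (forall i j, himg_le (s i) (s j) -> i = j) -> ~ wqo C.
Proof.
move=> Cs s_anti [_ no_anti]; apply: no_anti.
by exists s; split=> // i j ij /s_anti.
Qed.

Definition loopless_complete (m : nat) : digraph :=
  existT _ m (fun x y => x != y).

Definition path_complement (m : nat) : digraph :=
  existT _ m (fun x y => val y != (val x).+1).

Lemma loopless_complete_himg_le a b :
  himg_le (loopless_complete a) (loopless_complete b) -> a = b.
Proof.
move=> [f [f_hom f_onto]]; apply/esym/(inj_onto_ord_eq _ f_onto) => x y fxy.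
by apply/eqP/negPn/negP => /(f_hom x y); rewrite /= fxy eqxx.
Qed.

Lemma path_complement_himg_le a b :
  2 <= a -> himg_le (path_complement a) (path_complement b) -> a = b.
Proof.
move=> a2 [f [f_hom f_onto]]; apply/esym/(inj_onto_ord_eq _ f_onto) => p q fpq.
(* Non-edges pull back only to pairs (u, u+1), and since a >= 2 every vertex w
   lies on the non-edge (w, w+1) or (w-1, w), which pins down its preimage. *)
have succ_of u v : val (f v) = (f u).+1 -> val v = u.+1.
  move=> fuv; have : ~~ dedge (D := path_complement a) (f u) (f v) by rewrite /= fuv eqxx.
  by move/(hom_nonedge f_hom); rewrite negbK => /eqP.
case: (ltnP (f p).+1 a) => [succ_lt | a_le].
  have [c fc] := f_onto (Ordinal succ_lt).
  have cp : val c = p.+1 by apply: succ_of; rewrite fc.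
  have cq : val c = q.+1 by apply: succ_of; rewrite fc /= fpq.
  by apply: val_inj; apply: succn_inj; rewrite -cp -cq.
have fp_pos : 0 < f p by rewrite -ltnS (leq_trans a2 a_le).
have [c fc] := f_onto (Ordinal (leq_ltn_trans (leq_pred (f p)) (ltn_ord (f p)))).
have pc : val p = c.+1 by apply: succ_of; rewrite fc /= prednK.
have qc : val q = c.+1 by apply: succ_of; rewrite -fpq fc /= prednK.
by apply: val_inj; rewrite pc qc.
Qed.

Lemma Av_empty D E : dsize D = 0 -> 0 < dsize E -> Av D E.
Proof. by move=> D0 E_pos [f _]; case: (f (Ordinal E_pos)); rewrite D0. Qed.

Lemma Av_loopless_complete D (x y : 'I_(dsize D)) m :
  x != y -> ~~ dedge x y -> Av D (loopless_complete m).
Proof.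
move=> xy nxy [f [f_hom f_onto]]; have [a fa] := f_onto x; have [b fb] := f_onto y.
have ab : a != b by apply: contraNneq xy => eab; rewrite -fa -fb eab.
by have := f_hom a b ab; rewrite fa fb (negPf nxy).
Qed.

Lemma Av_path_complement D (x : 'I_(dsize D)) m :
  ~~ dedge x x -> Av D (path_complement m).
Proof.
move=> nxx [f [f_hom f_onto]]; have [a fa] := f_onto x.
have : dedge (D := path_complement m) a a by rewrite /= (ltn_eqF (ltnSn _)).
by move/f_hom; rewrite fa (negPf nxx).
Qed.

Lemma wqo_Av_complete D : wqo (Av D) -> exists n, 1 <= n /\ diso D (Kcomplete n).
Proof.
move=> Av_wqo.
have no_path_complements : ~ (forall i, Av D (path_complement i.+2)).
  move=> Av_s; apply: antichain_not_wqo Av_s _ Av_wqo => i j.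
  by move/(@path_complement_himg_le i.+2 j.+2 isT) => [].
case: (posnP (dsize D)) => [D0 | D_pos].
  by case: no_path_complements => i; apply: Av_empty.
case: (boolP [forall x : 'I_(dsize D), forall y, dedge x y]) => [/forallP full | ].
  by exists (dsize D); split=> //; apply: complete_diso => x; apply/forallP.
case/forallPn => x /forallPn [y nxy]; case: (eqVneq x y) => [exy | xy].
  by case: no_path_complements => i; apply: (@Av_path_complement D x); rewrite {2}exy.
have Av_s m : Av D (loopless_complete m) by apply: Av_loopless_complete xy nxy.
by case: (antichain_not_wqo Av_s loopless_complete_himg_le Av_wqo).
Qed.

Theorem theorem4p2 (D : digraph) :
  (wqo (Av D) <-> exists n, 1 <= n /\ diso D (Kcomplete n)) /\
  ((exists n, 1 <= n /\ diso D (Kcomplete n)) -> finite_upto_iso (Av D)).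
Proof.
have Av_finite : (exists n, 1 <= n /\ diso D (Kcomplete n)) -> finite_upto_iso (Av D).
  move=> [n [n_pos D_iso]]; apply: finite_upto_iso_sub (finite_upto_iso_small n).
  by move=> E; apply: Av_Kcomplete_small.
split=> //; split; first exact: wqo_Av_complete.
by move/Av_finite/finite_upto_iso_wqo.
Qed.
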